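(* Let $\alpha>0$. Suppose the kernel $W(x,y,h)$ is such that $$u^{\alpha*}_\theta(y)=M f_\theta^\alpha(y)u_\theta(y)+L\quad\text{for all }y,$$ for a vector $L\in\mathbb{R}^p$ depending only on $\alpha$ and $h$, and a nonsingular $p\times p$ matrix $M$ depending on $\theta,\alpha,h$, where for each $j=1,\dots,p$ either $\int u_{\theta_j}f_\theta^{1+\alpha}=0$ or the $j$-th column of $M$ does not depend on $\theta$. Then the estimating equation for the minimum DPD$^*$ estimator is the same as that of the minimum DPD estimator, and hence the two estimators are equal.
   Context: $\{f_\theta:\theta\in\Theta\subseteq\mathbb{R}^p\}$ is a parametric family of Lebesgue densities on $\mathbb{R}$, $u_\theta=\nabla_\theta\log f_\theta$ with components $u_{\theta_j}$, and $X_1,\dots,X_n$ is a sample with empirical distribution $G_n$. $W(x,y,h)\ge0$ is a kernel with bandwidth $h>0$, a probability density in $x$ for each $y$; $f^*_\theta(x)=\int W(x,y,h)f_\theta(y)dy$, $g_n^*(x)=\frac1n\sum_iW(x,X_i,h)$, $\tilde u_\theta=\nabla_\theta\log f^*_\theta$, and $u^{\alpha*}_\theta(y)=\int\tilde u_\theta(x)\{f^*_\theta(x)\}^\alpha W(x,y,h)\,dx$. The minimum density power divergence (DPD) estimator solves $\frac1n\sum_{i=1}^nf_\theta^\alpha(X_i)u_\theta(X_i)-\int f_\theta^{1+\alpha}u_\theta=0$ (minimizing $d_\alpha(g,f_\theta)=\int f_\theta^{1+\alpha}-\frac{1+\alpha}{\alpha}\int f_\theta^\alpha g+\frac1\alpha\int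 g^{1+\alpha}$ with $g$ replaced by the empirical distribution). The minimum DPD$^*$ estimator minimizes $d_\alpha(g_n^*,f^*_\theta)$ and solves $\int(f^*_\theta)^\alpha g_n^*\tilde u_\theta-\int(f^*_\theta)^{1+\alpha}\tilde u_\theta=0$, equivalently $\frac1n\sum_{i=1}^nu^{\alpha*}_\theta(X_i)-E_\theta[u^{\alpha*}_\theta(Y)]=0$ with $Y\sim f_\theta$. *)

From HB Require Import structures.
From mathcomp Require Import all_boot all_order all_algebra.
From mathcomp Require Import all_classical all_reals all_analysis.
Set Implicit Arguments. Unset Strict Implicit. Unset Printing Implicit Defensive.
Import Order.TTheory GRing.Theory Num.Theory.
Import numFieldNormedType.Exports.
Local Open Scope classical_set_scope.
Local Open Scope ring_scope.

Section Defs.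
Variable R : realType.
Variable p : nat.

Notation param := 'cV[R]_p.

Definition lebRint (g : R -> R) : R := Rintegral (@lebesgue_measure R) setT g.

Definition gradlog (F : param -> R -> R) (theta : param) (x : R) : 'cV[R]_p :=
  \col_j ('D_(delta_mx j 0 : param) (fun t : param => ln (F t x)) theta).

Definition score (f : param -> R -> R) := gradlog f.

Definition fstar (W : R -> R -> R -> R) (h : R) (f : param -> R -> R)
    (theta : param) (x : R) : R :=
  lebRint (fun y => W x y h * f theta y).

Definition utilde W h f := gradlog (fstar W h f).

Definition ualphastar (W : R -> R -> R -> R) (h alpha : R)
    (f : param -> R -> R) (theta : param) (y : R) : 'cV[R]_p :=
  \col_j lebRint (fun x => utilde W h f theta x j 0
                         * (fstar W h f theta x `^ alpha) * W x y h).

Definition dpd_eq (alpha : R) (f : param -> R -> R) (n : nat) (X : 'I_n -> R)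
    (theta : param) : 'cV[R]_p :=
  n%:R^-1 *: (\sum_(i < n) (f theta (X i) `^ alpha) *: score f theta (X i))
  - \col_j lebRint (fun y => f theta y `^ (1 + alpha) * score f theta y j 0).

Definition dpdstar_eq (W : R -> R -> R -> R) (h alpha : R) (f : param -> R -> R)
    (n : nat) (X : 'I_n -> R) (theta : param) : 'cV[R]_p :=
  n%:R^-1 *: (\sum_(i < n) ualphastar W h alpha f theta (X i))
  - \col_j lebRint (fun y => ualphastar W h alpha f theta y j 0 * f theta y).

End Defs.

From HB Require Import structures.
From mathcomp Require Import all_boot all_order all_algebra.
From mathcomp Require Import all_classical all_reals all_analysis.
Set Implicit Arguments. Unset Strict Implicit. Unset Printing Implicit Defensive.
Import Order.TTheory GRing.Theory Num.Theory.
Import numFieldNormedType.Exports.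
Local Open Scope classical_set_scope.
Local Open Scope ring_scope.

(* Proof idea: integrating the hypothesis u^{alpha*}_theta = M f_theta^alpha u_theta + L
   against the empirical distribution and against f_theta shows that the DPD*
   estimating function is M times the DPD estimating function, the constant L
   cancelling because both G_n and f_theta have total mass one.  Since M is
   nonsingular, the two functions vanish at the same theta. *)

Section Rintegral_linear.
Context d (T : measurableType d) (R : realType).
Variables (mu : {measure set T -> \bar R}) (D : set T).
Hypothesis mD : measurable D.

Lemma integrableZl_EFin (k : R) (g : T -> R) :
  mu.-integrable D (EFin \o g) -> mu.-integrable D (EFin \o (fun x => k * g x)).
Proof. by move=> gi; apply: eq_integrable (integrableZl mD k gi). Qed.

Lemma integrable_sum_EFin I (s : seq I) (g : I -> T -> R) :
  (forall i, mu.-integrable D (EFin \o g i)) ->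
  mu.-integrable D (EFin \o (fun x => \sum_(i <- s) g i x)).
Proof.
move=> gi.
have := @integrable_sum _ _ _ mu D mD _ s xpredT _ (fun i _ => gi i).
by apply: eq_integrable => // x _; rewrite /= sumEFin.
Qed.

Lemma Rintegral_sum I (s : seq I) (g : I -> T -> R) :
  (forall i, mu.-integrable D (EFin \o g i)) ->
  \int[mu]_(x in D) (\sum_(i <- s) g i x) = \sum_(i <- s) \int[mu]_(x in D) g i x.
Proof.
move=> gi; elim: s => [|i s ih].
  under eq_Rintegral do rewrite big_nil.
  by rewrite Rintegral_cst // mul0r big_nil.
under eq_Rintegral do rewrite big_cons.
by rewrite RintegralD // ?ih ?big_cons //; exact: integrable_sum_EFin.
Qed.

Lemma Rintegral_affine_mx (p : nat) (w : T -> R) (g : T -> 'cV[R]_p)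
    (A : 'M[R]_p) (b : 'cV[R]_p) :
  mu.-integrable D (EFin \o w) -> \int[mu]_(x in D) w x = 1 ->
  (forall j, mu.-integrable D (EFin \o (fun x => g x j 0 * w x))) ->
  \col_j (\int[mu]_(x in D) ((A *m g x + b) j 0 * w x))
  = A *m \col_j (\int[mu]_(x in D) (g x j 0 * w x)) + b.
Proof.
move=> wi w1 gwi; apply/matrixP => j k; rewrite ord1 !mxE.
have Agwi k' : mu.-integrable D (EFin \o (fun x => A j k' * (g x k' 0 * w x))).
  exact: integrableZl_EFin.
under eq_Rintegral => x _.
  rewrite !mxE mulrDl big_distrl /=.
  under eq_bigr do rewrite -mulrA.
over.
rewrite RintegralD //; last by [exact: integrableZl_EFin];
  last exact: integrable_sum_EFin.
rewrite Rintegral_sum // RintegralZl // w1 mulr1; congr (_ + _).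
by apply: eq_bigr => k' _; rewrite mxE RintegralZl.
Qed.

End Rintegral_linear.

Lemma mean_affine_mx (R : numFieldType) (p n : nat) (A : 'M[R]_p)
    (b : 'cV[R]_p) (v : 'I_n -> 'cV[R]_p) :
  (0 < n)%N ->
  n%:R^-1 *: \sum_(i < n) (A *m v i + b) = A *m (n%:R^-1 *: \sum_(i < n) v i) + b.
Proof.
move=> n0; have n0R : n%:R != 0 :> R by rewrite pnatr_eq0 -lt0n.
rewrite big_split /= -mulmx_sumr sumr_const card_ord -scalemxAr scalerDr.
by rewrite -[b *+ n]scaler_nat scalerA mulVf // scale1r.
Qed.

Lemma powR_mulr (R : realType) (x a : R) :
  0 <= x -> 0 < a -> x `^ a * x = x `^ (1 + a).
Proof.
by move=> x0 a0; rewrite powRD ?powRr1 1?mulrC // gt_eqF // addr_gt0.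
Qed.

Lemma density_integrable (R : realType) (w : R -> R) :
  measurable_fun setT w -> (forall x, 0 <= w x) ->
  (\int[@lebesgue_measure R]_x (w x)%:E = 1)%E ->
  (@lebesgue_measure R).-integrable setT (EFin \o w) /\ lebRint w = 1.
Proof.
move=> mw w0 w1; split; last by rewrite /lebRint /Rintegral w1.
apply/integrableP; split; first exact/measurable_realfun.measurable_EFinP.
under eq_integral do rewrite /= ger0_norm ?w0 //.
by rewrite w1 ltry.
Qed.

Lemma dpdstar_eq_affine (R : realType) (p : nat) (f : 'cV[R]_p -> R -> R)
    (W : R -> R -> R -> R) (h alpha : R) (A : 'M[R]_p) (b : 'cV[R]_p)
    (n : nat) (X : 'I_n -> R) (theta : 'cV[R]_p) :
  0 < alpha -> (0 < n)%N ->
  measurable_fun setT (f theta) -> (forall x, 0 <= f theta x) ->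
  (\int[@lebesgue_measure R]_x (f theta x)%:E = 1)%E ->
  (forall j : 'I_p, (@lebesgue_measure R).-integrable setT
       (fun y => (f theta y `^ (1 + alpha) * score f theta y j 0)%:E)) ->
  (forall y, ualphastar W h alpha f theta y
             = A *m ((f theta y `^ alpha) *: score f theta y) + b) ->
  dpdstar_eq W h alpha f X theta = A *m dpd_eq alpha f X theta.
Proof.
move=> a0 n0 mf f0 f1 fsi hu.
have [fi {}f1] := density_integrable mf f0 f1.
have gf y j : ((f theta y `^ alpha) *: score f theta y) j 0 * f theta y
              = f theta y `^ (1 + alpha) * score f theta y j 0.
  by rewrite mxE mulrAC powR_mulr.
have gfi j : (@lebesgue_measure R).-integrable setT
    (EFin \o (fun y => ((f theta y `^ alpha) *: score f theta y) j 0 * f theta y)).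
  by apply: eq_integrable (fsi j) => // y _; rewrite /= gf.
have Eu : \col_j lebRint (fun y => ualphastar W h alpha f theta y j 0 * f theta y)
        = A *m \col_j lebRint (fun y => f theta y `^ (1 + alpha) * score f theta y j 0)
          + b.
  rewrite /lebRint; under eq_mx do under eq_Rintegral do rewrite hu.
  rewrite Rintegral_affine_mx //.
  congr (A *m _ + b); apply/matrixP => j k; rewrite !mxE.
  by under eq_Rintegral do rewrite gf.
rewrite /dpdstar_eq Eu /dpd_eq; under eq_bigr do rewrite hu.
by rewrite mean_affine_mx // mulmxBr opprD addrACA subrr addr0.
Qed.

Theorem lemma7 (R : realType) (p : nat) (Theta : set 'cV[R]_p)
  (f : 'cV[R]_p -> R -> R) (W : R -> R -> R -> R) (h alpha : R)
  (L : 'cV[R]_p) (M : 'cV[R]_p -> 'M[R]_p) :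
  0 < alpha -> 0 < h ->
  (forall theta, Theta theta ->
     measurable_fun setT (f theta) /\ (forall x, 0 <= f theta x) /\
     (\int[@lebesgue_measure R]_x (f theta x)%:E = 1)%E) ->
  (forall y, measurable_fun setT (fun x => W x y h) /\
     (forall x, 0 <= W x y h) /\
     (\int[@lebesgue_measure R]_x (W x y h)%:E = 1)%E) ->
  (forall theta, Theta theta -> forall j : 'I_p,
     (@lebesgue_measure R).-integrable setT
       (fun y => (f theta y `^ (1 + alpha) * score f theta y j 0)%:E)) ->
  (forall theta, Theta theta -> forall y,
     ualphastar W h alpha f theta y
     = M theta *m ((f theta y `^ alpha) *: score f theta y) + L) ->
  (forall theta, Theta theta -> M theta \in unitmx) ->
  (forall j : 'I_p,
     (forall theta, Theta theta ->
        lebRint (fun y => score f theta y j 0 * f theta y `^ (1 + alpha)) = 0)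
     \/ (forall theta theta', Theta theta -> Theta theta' ->
        col j (M theta) = col j (M theta'))) ->
  forall (n : nat) (X : 'I_n -> R), (0 < n)%N ->
  forall theta, Theta theta ->
    (dpdstar_eq W h alpha f X theta = 0 <-> dpd_eq alpha f X theta = 0).
Proof.
move=> a0 _ hf _ hint hu hM _ n X n0 theta th.
have [mf [f0 f1]] := hf theta th.
rewrite (dpdstar_eq_affine X a0 n0 mf f0 f1 (hint theta th) (hu theta th)).
split => [Mv0|->]; last by rewrite mulmx0.
by rewrite -(mulKmx (hM theta th) (dpd_eq alpha f X theta)) Mv0 mulmx0.
Qed.
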